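(* Let $\Lambda^r_{\mathrm{nf}}$ be the set of normal resource $\lambda$-terms equipped with the resource partial metric $r$, and let $\mathrm{Ide}_r(\Lambda^r_{\mathrm{nf}})$ be the set of ideals of $(\Lambda^r_{\mathrm{nf}},\leq_r)$, ordered by inclusion. Then the partial metric $H^*_r$ quantifies the Scott topology of $(\mathrm{Ide}_r(\Lambda^r_{\mathrm{nf}}),\subseteq)$, i.e. $\mathcal O_\sigma=\mathcal O_{H^*_r}$.
   Context: Resource terms: $t::=x\mid\lambda x.t\mid t\langle t_1,\dots,t_k\rangle$ where $\langle t_1,\dots,t_k\rangle$ is a finite multiset ($k\geq0$; $\emptyset$ is the empty multiset). A normal resource term has the form $t=\lambda x_1\dots\lambda x_n.x\,b_1\dots b_m$ with each $b_i=\langle t_i^1,\dots,t_i^{m_i}\rangle$ a multiset of normal resource terms. Height: $h(t)=\max_{i,j}h(t_i^j)+1$ (max of empty set $=0$). The head occurrence $x$ of $t$ has height $1$; an occurrence inside $t_i^j$ has height (its height in $t_i^j$)$+1$. Truncation $t|_n$: if $h(t)\leq n$ then $t|_n=t$; otherwise replace every subterm $x\,b_1\dots b_m$ whose head occurrence $x$ is at height $n$ by $x\,\emptyset\dots\emptyset$. Resource partial metric: $r(t,u)=\inf\{2^{-n}\mid n\in\mathbb N,\ h(t),h(u)\geq n,\ t|_n=u|_n\}$. For a partial metric $p$: $x\leq_p y$ iff $p(x,y)\leq p(x,x)$; open balls $B^p_\epsilon(x)=\{y\mid p(y,x)<p(x,x)+\epsilon\}$; $\mathcal O_p$ = unions of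 open balls. An ideal is a lower directed (nonempty) subset. $H^*_r(A,B)=\max\{\sup_{a\in A}\inf_{a'\in A,\ a\leq_r a',\ b\in B}r(a',b),\ \sup_{b\in B}\inf_{b'\in B,\ b\leq_r b',\ a\in A}r(a,b')\}$. Scott topology of a poset: upper sets $U$ such that $x\in U$ implies $y\in U$ for some $y\ll x$, where $y\ll x$ iff every directed $\Delta$ with $x\leq\bigvee\Delta$ contains some $d\geq y$. *)

From HB Require Import structures.
From mathcomp Require Import all_boot all_order all_algebra.
From mathcomp Require Import boolp classical_sets reals.
From Stdlib Require Import Permutation.
Set Implicit Arguments. Unset Strict Implicit. Unset Printing Implicit Defensive.
Import Order.TTheory GRing.Theory Num.Theory.
Local Open Scope classical_set_scope.
Local Open Scope ring_scope.

(* Normal resource terms  \x_1..\x_k. x b_1 .. b_m  in de Bruijn notation: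
   NT k x [:: b_1; ..; b_m], each bag b_i a finite multiset of normal terms
   represented by a list (taken up to permutation, see [nteq]). *)
Inductive nterm : Type :=
| NT : nat -> nat -> seq (seq nterm) -> nterm.

Fixpoint nteq (t u : nterm) {struct t} : Prop :=
  match t, u with
  | NT k x bs, NT k' x' bs' =>
    k = k' /\ x = x' /\
    (fix bagseq (bs bs' : seq (seq nterm)) : Prop :=
       match bs, bs' with
       | [::], [::] => True
       | b :: bs1, b' :: bs1' =>
         (exists c : seq nterm, Permutation b' c /\
            (fix pw (b c : seq nterm) : Prop :=
               match b, c with
               | [::], [::] => True
               | t1 :: b1, u1 :: c1 => nteq t1 u1 /\ pw b1 c1
               | _, _ => False
               end) b c)
         /\ bagseq bs1 bs1'
       | _, _ => False
       end) bs bs'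
  end.

Fixpoint height (t : nterm) : nat :=
  match t with
  | NT _ _ bs => (foldr maxn 0%N (map (fun b => foldr maxn 0%N (map height b)) bs)).+1
  end.

Fixpoint trunc_rec (n : nat) (t : nterm) {struct t} : nterm :=
  match t with
  | NT k x bs =>
    match n with
    | 0%N => t
    | 1%N => NT k x (map (fun _ => [::]) bs)
    | n'.+1 => NT k x (map (map (trunc_rec n')) bs)
    end
  end.

Definition trunc (n : nat) (t : nterm) : nterm :=
  if (height t <= n)%N then t else trunc_rec n t.

(* resource partial metric; convention inf(empty) = 1 (the maximal distance) *)
Definition rdist (R : realType) (t u : nterm) : R :=
  inf ([set (2 : R) ^- n | n in
        [set n : nat | (1 <= n)%N /\ (n <= height t)%N /\ (n <= height u)%N
                       /\ nteq (trunc n t) (trunc n u)]] `|` [set 1]).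

Definition pm_le (T : Type) (R : realType) (p : T -> T -> R) (x y : T) : Prop :=
  p x y <= p x x.

Definition pm_ball (T : Type) (R : realType) (p : T -> T -> R) (x : T) (e : R)
  : set T := [set y | p y x < p x x + e].

Definition pm_open (T : Type) (R : realType) (p : T -> T -> R) (U : set T)
  : Prop :=
  exists F : set (T * R), (forall i, F i -> 0 < i.2) /\
    U = \bigcup_(i in F) pm_ball p i.1 i.2.

Definition is_ideal (T : Type) (le : T -> T -> Prop) (I : set T) : Prop :=
  (exists x, I x) /\
  (forall x y, I y -> le x y -> I x) /\
  (forall x y, I x -> I y -> exists z, I z /\ le x z /\ le y z).

Definition Ide (R : realType) : Type :=
  {I : set nterm | is_ideal (pm_le (@rdist R)) I}.

Definition ide_le (R : realType) (A B : Ide R) : Prop :=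
  (proj1_sig A `<=` proj1_sig B).

Definition Hstar (R : realType) (A B : Ide R) : R :=
  let A0 := proj1_sig A in let B0 := proj1_sig B in
  let le := pm_le (@rdist R) in
  Num.max
    (sup [set inf [set @rdist R q.1 q.2 |
                   q in [set q : nterm * nterm | A0 q.1 /\ le a q.1 /\ B0 q.2]]
         | a in A0])
    (sup [set inf [set @rdist R q.1 q.2 |
                   q in [set q : nterm * nterm | B0 q.2 /\ le b q.2 /\ A0 q.1]]
         | b in B0]).

Definition directed (P : Type) (le : P -> P -> Prop) (D : set P) : Prop :=
  (exists d, D d) /\
  (forall a b, D a -> D b -> exists c, D c /\ le a c /\ le b c).

Definition is_lub (P : Type) (le : P -> P -> Prop) (D : set P) (s : P) : Prop :=
  (forall d, D d -> le d s) /\ (forall u, (forall d, D d -> le d u) -> le s u).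

Definition way_below (P : Type) (le : P -> P -> Prop) (y x : P) : Prop :=
  forall (D : set P) (s : P), directed le D -> is_lub le D s -> le x s ->
    exists d, D d /\ le y d.

Definition scott_open (P : Type) (le : P -> P -> Prop) (U : set P) : Prop :=
  (forall x y, U x -> le x y -> U y) /\
  (forall x, U x -> exists y, way_below le y x /\ U y).

From mathcomp Require Import all_boot all_order all_algebra.
From mathcomp Require Import boolp classical_sets reals.
From mathcomp Require Import zify.
From Stdlib Require Import Permutation.
Set Implicit Arguments. Unset Strict Implicit. Unset Printing Implicit Defensive.
Import Order.TTheory GRing.Theory Num.Theory.
Local Open Scope classical_set_scope.
Local Open Scope ring_scope.

(* For normal terms, [t <=_r u] holds exactly when t is the truncation of u at
   height h(t).  Ideals of <=_r therefore form an algebraic domain whose compact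
   elements are the principal ideals: a set of ideals is Scott open iff it is an
   upper set each of whose members A contains some u with (down u) in it.
   Because r decreases along <=_r and ideals are directed, H^*_r(A, B) is just
   inf {r(a, b) | a in A, b in B}.  Hence every H^*_r-ball is an upper set, and
   each of its members X contains some b with (down b) already in the ball.
   Conversely, if u is in A then every B in the ball of radius 2^-h(u) around A
   contains u: some b in B agrees with some a in A up to height h(u), and the
   truncation of b at h(u) lies above u, since both lie below a common upper
   bound of u and a in A. *)

Lemma map_List_map (A B : Type) (f : A -> B) (l : seq A) : map f l = List.map f l.
Proof. by elim: l => //= a l ->. Qed.

Lemma eq_map_In (A B : Type) (f g : A -> B) (l : seq A) :
  (forall a, List.In a l -> f a = g a) -> map f l = map g l.
Proof. by move=> fg; rewrite !map_List_map; apply: List.map_ext_in. Qed.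

Lemma leq_foldr_maxn_In (A : Type) (f : A -> nat) (l : seq A) y :
  List.In y l -> (f y <= foldr maxn 0 (map f l))%N.
Proof.
elim: l => //= a l IH [->|yl]; first by rewrite leq_maxl.
by rewrite (leq_trans (IH yl)) ?leq_maxr.
Qed.

Lemma foldr_maxn_minl (A : Type) (c : nat) (f : A -> nat) (l : seq A) :
  foldr maxn 0 (map (fun a => minn c (f a)) l) = minn c (foldr maxn 0 (map f l)).
Proof. by elim: l => [|a l IH] /=; [rewrite minn0 | rewrite IH; lia]. Qed.

Section Forall2In.
Variables (A B C : Type).

Lemma Forall2_refl_In (R : A -> A -> Prop) (l : seq A) :
  (forall a, List.In a l -> R a a) -> List.Forall2 R l l.
Proof.
elim: l => [|a l IH] Rl; constructor; first by apply: Rl; left.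
by apply: IH => b bl; apply: Rl; right.
Qed.

Lemma Forall2_flip_In (R : A -> B -> Prop) (S : B -> A -> Prop) l1 l2 :
  (forall a b, List.In a l1 -> R a b -> S b a) ->
  List.Forall2 R l1 l2 -> List.Forall2 S l2 l1.
Proof.
move=> RS F; elim: F RS => [|a b l1' l2' ab _ IH] RS; constructor.
- by apply: RS => //; left.
- by apply: IH => a' b' a'l; apply: RS; right.
Qed.

Lemma Forall2_trans_In (R : A -> B -> Prop) (S : B -> C -> Prop)
    (T : A -> C -> Prop) l1 l2 l3 :
  (forall a b c, List.In a l1 -> R a b -> S b c -> T a c) ->
  List.Forall2 R l1 l2 -> List.Forall2 S l2 l3 -> List.Forall2 T l1 l3.
Proof.
move=> RST F; elim: F l3 RST => [|a b l1' l2' ab _ IH] l3 RST G;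
  inversion G; subst; constructor.
- by apply: RST ab _ => //; left.
- by apply: IH => // a' b' c' a'l; apply: RST; right.
Qed.

Lemma Forall2_map_In (R : A -> A -> Prop) (S : B -> B -> Prop) (f g : A -> B) l1 l2 :
  (forall a b, List.In a l1 -> R a b -> S (f a) (g b)) ->
  List.Forall2 R l1 l2 -> List.Forall2 S (map f l1) (map g l2).
Proof.
move=> RS F; elim: F RS => [|a b l1' l2' ab _ IH] RS /=; constructor.
- by apply: RS => //; left.
- by apply: IH => a' b' a'l; apply: RS; right.
Qed.

End Forall2In.

Lemma inf_eq_cofinal (R : realType) (S S' : set R) : S `<=` S' -> S !=set0 ->
  has_lbound S' -> (forall x, S' x -> exists2 y, S y & y <= x) -> inf S = inf S'.
Proof.
move=> SS' S0 lbS' cofS.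
have lbS : has_lbound S by case: lbS' => c c_lb; exists c => y /SS'/c_lb.
apply/le_anti/andP; split.
- apply: lb_le_inf => [|x /cofS [y Sy yx]]; first by case: S0 => x /SS'; exists x.
  exact: le_trans (ge_inf lbS Sy) yx.
- by apply: lb_le_inf => // y /SS' S'y; apply: ge_inf.
Qed.

Section SetDistance.
Variables (R : realType) (T : Type) (p : T -> T -> R).
Hypothesis p_ge0 : forall x y, 0 <= p x y.

Definition set_dist (A B : set T) : R := inf [set p q.1 q.2 | q in A `*` B].

Lemma has_lbound_dist (P : set (T * T)) : has_lbound [set p q.1 q.2 | q in P].
Proof. by exists 0 => _ [q _ <-]. Qed.

Lemma set_dist_le (A B : set T) a b : A a -> B b -> set_dist A B <= p a b.
Proof. by move=> Aa Bb; apply: ge_inf (has_lbound_dist _) _ _; exists (a, b). Qed.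

Lemma set_dist_lt (A B : set T) c : A !=set0 -> B !=set0 -> set_dist A B < c ->
  exists a b, [/\ A a, B b & p a b < c].
Proof.
move=> [a0 Aa0] [b0 Bb0] /inf_lt[|_ [[a b] [Aa Bb] <-] abc]; last by exists a, b.
by exists (p a0 b0), (a0, b0).
Qed.

Lemma set_dist_subl (A A' B : set T) : A `<=` A' -> A !=set0 -> B !=set0 ->
  set_dist A' B <= set_dist A B.
Proof.
move=> AA' [a0 Aa0] [b0 Bb0].
apply: lb_le_inf => [|_ [[a b] [Aa Bb] <-]]; first by exists (p a0 b0), (a0, b0).
exact: set_dist_le (AA' _ Aa) Bb.
Qed.

Variable le : T -> T -> Prop.
Hypotheses (le_refl : forall x, le x x)
  (p_antil : forall a a' b, le a a' -> p a' b <= p a b)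
  (p_antir : forall a b b', le b b' -> p a b' <= p a b).

Lemma set_dist_abovel (A B : set T) a : is_ideal le A -> B !=set0 -> A a ->
  inf [set p q.1 q.2 | q in [set q | A q.1 /\ le a q.1 /\ B q.2]] = set_dist A B.
Proof.
move=> [_ [_ dirA]] [b0 Bb0] Aa; apply: inf_eq_cofinal (has_lbound_dist _) _.
- by move=> _ [q [Aq1 [_ Bq2]] <-]; exists q.
- by exists (p a b0), (a, b0); do ?split.
- move=> _ [[a' b] [Aa' Bb] <-] /=.
  have [z [Az [az a'z]]] := dirA a a' Aa Aa'.
  by exists (p z b); [exists (z, b) | apply: p_antil].
Qed.

Lemma set_dist_abover (A B : set T) b : A !=set0 -> is_ideal le B -> B b ->
  inf [set p q.1 q.2 | q in [set q | B q.2 /\ le b q.2 /\ A q.1]] = set_dist A B.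
Proof.
move=> [a0 Aa0] [_ [_ dirB]] Bb; apply: inf_eq_cofinal (has_lbound_dist _) _.
- by move=> _ [q [Bq2 [_ Aq1]] <-]; exists q.
- by exists (p a0 b), (a0, b); do ?split.
- move=> _ [[a b'] [Aa Bb'] <-] /=.
  have [z [Bz [bz b'z]]] := dirB b b' Bb Bb'.
  by exists (p a z); [exists (a, z) | apply: p_antir].
Qed.

End SetDistance.

Section IdealCompletion.
Variables (T : Type) (le : T -> T -> Prop).
Hypotheses (le_refl : forall x, le x x)
  (le_trans : forall x y z, le x y -> le y z -> le x z).

Local Notation ideal := {I : set T | is_ideal le I}.
Local Notation subi := (fun A B : ideal => proj1_sig A `<=` proj1_sig B).

Lemma is_ideal_principal u : is_ideal le [set t | le t u].
Proof.
split; first by exists u; apply: le_refl.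
split=> [x y /= yu xy | x y xu yu]; first exact: le_trans xy yu.
by exists u; split=> //; apply: le_refl.
Qed.

Definition principal_ideal u : ideal := exist _ _ (is_ideal_principal u).

Lemma ideal_nonempty (A : ideal) : proj1_sig A !=set0.
Proof. by have [] := proj2_sig A. Qed.

Lemma principal_ideal_sub (A : ideal) a : proj1_sig A a -> subi (principal_ideal a) A.
Proof. by have [_ [lowA _]] := proj2_sig A => Aa t /lowA; apply. Qed.

Lemma is_ideal_bigcup (D : set ideal) : directed subi D ->
  is_ideal le (\bigcup_(d in D) proj1_sig d).
Proof.
move=> [[d0 Dd0] dirD]; split.
  by have [[x d0x] _] := proj2_sig d0; exists x, d0.
split=> [x y [d Dd dy] xy | x y [d1 Dd1 d1x] [d2 Dd2 d2y]].
  by have [_ [lowd _]] := proj2_sig d; exists d => //; apply: lowd dy xy.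
have [d [Dd [d1d d2d]]] := dirD d1 d2 Dd1 Dd2.
have [_ [_ dird]] := proj2_sig d.
have [z [dz [xz yz]]] := dird x y (d1d _ d1x) (d2d _ d2y).
by exists z; split=> //; exists d.
Qed.

Lemma way_below_principal (A : ideal) a :
  proj1_sig A a -> way_below subi (principal_ideal a) A.
Proof.
move=> Aa D s dirD [_ s_least] As.
have s_sub_cup : proj1_sig s `<=` \bigcup_(d in D) proj1_sig d.
  by apply: (s_least (exist _ _ (is_ideal_bigcup dirD))) => d Dd t dt; exists d.
have [d Dd da] := s_sub_cup a (As a Aa).
by exists d; split=> //; apply: principal_ideal_sub.
Qed.

Lemma directed_principal_ideals (A : ideal) :
  directed subi [set principal_ideal a | a in proj1_sig A].
Proof.
have [[a0 Aa0] [_ dirA]] := proj2_sig A.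
split=> [|_ _ [a1 Aa1 <-] [a2 Aa2 <-]]; first by exists (principal_ideal a0), a0.
have [z [Az [a1z a2z]]] := dirA a1 a2 Aa1 Aa2.
exists (principal_ideal z); split; first by exists z.
by split=> t /= ta; apply: le_trans ta _.
Qed.

Lemma is_lub_principal_ideals (A : ideal) :
  is_lub subi [set principal_ideal a | a in proj1_sig A] A.
Proof.
split=> [_ [a Aa <-] | B B_ub t At]; first exact: principal_ideal_sub.
by apply: (B_ub (principal_ideal t)); [exists t | apply: le_refl].
Qed.

Lemma scott_open_idealP (U : set ideal) : scott_open subi U <->
  (forall A B, U A -> subi A B -> U B) /\
  (forall A, U A -> exists2 a, proj1_sig A a & U (principal_ideal a)).
Proof.
split=> -[Uup Ucompact]; split=> // A UA.
- have [Y [YA UY]] := Ucompact A UA.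
  have [_ [[a Aa <-] Ya]] := YA _ _ (directed_principal_ideals A)
    (is_lub_principal_ideals A) (fun t At => At).
  by exists a => //; apply: Uup Ya.
- have [a Aa Ua] := Ucompact A UA.
  by exists (principal_ideal a); split=> //; apply: way_below_principal.
Qed.

End IdealCompletion.

Lemma height_gt0 t : (0 < height t)%N.
Proof. by case: t. Qed.

Lemma heightE k x bs : height (NT k x bs) =
  (foldr maxn 0 (map (fun b => foldr maxn 0 (map height b)) bs)).+1.
Proof. by []. Qed.

Lemma height_bag_lt k x bs b s : List.In b bs -> List.In s b ->
  (height s < height (NT k x bs))%N.
Proof.
move=> bbs sb; rewrite heightE ltnS.
apply: leq_trans (leq_foldr_maxn_In (fun b => foldr maxn 0 (map height b)) bbs).
exact: (leq_foldr_maxn_In height sb).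
Qed.

Lemma nterm_height_ind (P : nterm -> Prop) :
  (forall k x bs, (forall b s, List.In b bs -> List.In s b -> P s) -> P (NT k x bs)) ->
  forall t, P t.
Proof.
move=> IHt t; suff: forall N t, (height t <= N)%N -> P t by apply; apply: leqnn.
elim=> [|N IH] [k x bs] ht; first by move: (height_gt0 (NT k x bs)); lia.
apply: IHt => b s bbs sb; apply: IH.
by have := height_bag_lt k x bbs sb; lia.
Qed.

Definition bag_eq (b b' : seq nterm) : Prop :=
  exists2 c, Permutation b' c & List.Forall2 nteq b c.

Lemma nteqE k x bs k' x' bs' : nteq (NT k x bs) (NT k' x' bs') <->
  [/\ k = k', x = x' & List.Forall2 bag_eq bs bs'].
Proof.
have pwE b c : (fix pw (b c : seq nterm) : Prop :=
    match b, c with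
    | [::], [::] => True
    | t1 :: b1, u1 :: c1 => nteq t1 u1 /\ pw b1 c1
    | _, _ => False
    end) b c <-> List.Forall2 nteq b c.
  elim: b c => [|t b IH] [|u c]; split=> //; try by inversion 1.
  - by case=> tu /IH bc; constructor.
  - by inversion 1; subst; split=> //; apply/IH.
split=> [[-> [-> bsE]] | [-> -> bsE]]; do ?split=> //.
- elim: bs bs' bsE => [|b bs IH] [|b' bs'] //= [[c [bc /pwE cb]] /IH bsE].
  by constructor=> //; exists c.
- elim: bsE => // b b' bs0 bs0' [c bc /pwE cb] _ IH.
  by split=> //; exists c.
Qed.

Lemma nteq_refl t : nteq t t.
Proof.
elim/nterm_height_ind: t => k x bs IH; apply/nteqE; split=> //.
apply: Forall2_refl_In => b bbs; exists b => //.
apply: Forall2_refl_In => s sb; exact: (IH _ _ bbs sb).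
Qed.

Lemma nteq_sym t u : nteq t u -> nteq u t.
Proof.
elim/nterm_height_ind: t u => k x bs IH [k' x' bs'] /nteqE [-> -> bsE].
apply/nteqE; split=> //; apply: Forall2_flip_In bsE => b b' bbs [c bc cb].
have bc' : List.Forall2 nteq c b.
  apply: Forall2_flip_In cb => s s' sb; exact: (IH _ _ bbs sb).
have [d [db dc]] := Permutation_Forall2 (Permutation_sym bc) bc'.
by exists d.
Qed.

Lemma nteq_trans t u v : nteq t u -> nteq u v -> nteq t v.
Proof.
elim/nterm_height_ind: t u v => k x bs IH [k' x' bs'] [k'' x'' bs''].
move=> /nteqE [-> -> tu] /nteqE [-> -> uv]; apply/nteqE; split=> //.
apply: Forall2_trans_In tu uv => b b' b'' bbs [c b'c bc] [d b''d b'd].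
have [e [ce c'e]] := Permutation_Forall2 b'c b'd.
exists e; first exact: Permutation_trans b''d ce.
apply: Forall2_trans_In bc c'e => s s' s'' sb; exact: (IH _ _ bbs sb).
Qed.

Lemma nteq_trunc_rec n t u : nteq t u -> nteq (trunc_rec n t) (trunc_rec n u).
Proof.
elim/nterm_height_ind: t n u => k x bs IH n [k' x' bs'] /nteqE [-> -> tu].
case: n => [|[|n]] /=; first by apply/nteqE.
- by apply/nteqE; split=> //; apply: Forall2_map_In tu => b b' _ _; exists [::].
- apply/nteqE; split=> //; apply: Forall2_map_In tu => b b' bbs [c b'c bc].
  exists (map (trunc_rec n.+1) c); first by rewrite !map_List_map; apply: Permutation_map.
  apply: Forall2_map_In bc => s s' sb; exact: (IH _ _ bbs sb).
Qed.

Lemma height_trunc_rec n t : (0 < n)%N -> height (trunc_rec n t) = minn n (height t).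
Proof.
elim/nterm_height_ind: t n => k x bs IH [|[|n]] // _.
- rewrite [trunc_rec _ _]/= heightE -map_comp /=.
  have -> : foldr maxn 0 (map (fun=> 0%N) bs) = 0%N by elim: bs {IH} => //= b bs ->.
  by have := height_gt0 (NT k x bs); lia.
- rewrite [trunc_rec _ _]/= !heightE -map_comp minnSS -foldr_maxn_minl.
  congr (foldr _ _ _).+1.
  apply: eq_map_In => b bbs /=; rewrite -map_comp -foldr_maxn_minl.
  congr foldr; apply: eq_map_In => s sb /=; exact: (IH _ _ bbs sb).
Qed.

Lemma trunc_rec_id n t : (0 < n)%N -> (height t <= n)%N -> trunc_rec n t = t.
Proof.
elim/nterm_height_ind: t n => k x bs IH [|[|n]] // _ ht /=; congr NT;
  rewrite -[RHS]map_id; apply: eq_map_In => b bbs.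
- case: b bbs => // s b bbs; have := height_bag_lt k x bbs (or_introl erefl).
  by have := height_gt0 s; lia.
- rewrite -[RHS]map_id; apply: eq_map_In => s sb; apply: (IH _ _ bbs sb) => //.
  by have := height_bag_lt k x bbs sb; lia.
Qed.

Lemma trunc_rec_comp m n t : (0 < m <= n)%N ->
  trunc_rec m (trunc_rec n t) = trunc_rec m t.
Proof.
elim/nterm_height_ind: t m n => k x bs IH [|[|m]] [|[|n]] // mn /=;
  rewrite -map_comp //; congr NT; apply: eq_map_In => b bbs /=.
rewrite -map_comp; apply: eq_map_In => s sb; apply: (IH _ _ bbs sb) _ => /=.
by move: mn; rewrite !ltnS.
Qed.

Lemma truncE n t : (0 < n)%N -> trunc n t = trunc_rec n t.
Proof. by rewrite /trunc; case: ifP => // ht n_gt0; rewrite trunc_rec_id. Qed.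

(* [0 < n] rules out [trunc_rec 0], which is the identity. *)
Definition agree n t u := [/\ (0 < n)%N, (n <= height t)%N, (n <= height u)%N &
  nteq (trunc_rec n t) (trunc_rec n u)].

Lemma agree_refl n t : (0 < n <= height t)%N -> agree n t t.
Proof. by case/andP=> n_gt0 nt; split=> //; apply: nteq_refl. Qed.

Lemma agree_sym n t u : agree n t u -> agree n u t.
Proof. by case=> *; split=> //; apply: nteq_sym. Qed.

Lemma agree_trans n t u v : agree n t u -> agree n u v -> agree n t v.
Proof. by case=> ? ? ? tu [? ? ? uv]; split=> //; apply: nteq_trans tu uv. Qed.

Lemma agree_le m n t u : (0 < m <= n)%N -> agree n t u -> agree m t u.
Proof.
move=> mn [n_gt0 nt nu tu]; split; try lia.
by rewrite -(trunc_rec_comp t mn) -(trunc_rec_comp u mn); apply: nteq_trunc_rec.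
Qed.

Lemma agree_trunc_rec m t u : agree m t u ->
  [/\ height (trunc_rec m t) = m, agree m (trunc_rec m t) t & agree m (trunc_rec m t) u].
Proof.
move=> [m_gt0 mt mu tu].
have hw : height (trunc_rec m t) = m by rewrite height_trunc_rec //; lia.
have idem : trunc_rec m (trunc_rec m t) = trunc_rec m t.
  by rewrite trunc_rec_comp // m_gt0 leqnn.
by split=> //; split; rewrite ?hw ?idem //; apply: nteq_refl.
Qed.

Section PowersOfHalf.
Variable R : realType.

Lemma exp2N_gt0 n : 0 < (2 : R) ^- n.
Proof. by rewrite invr_gt0 exprn_gt0. Qed.

Lemma exp2N_le n m : (n <= m)%N -> (2 : R) ^- m <= (2 : R) ^- n.
Proof. by move=> nm; rewrite lef_pV2 ?posrE ?exprn_gt0 // ler_eXn2l // ltr1n. Qed.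

Lemma exp2N_le1 n : (2 : R) ^- n <= 1.
Proof. by have := exp2N_le (leq0n n); rewrite expr0 invr1. Qed.

Lemma mul2_exp2NS n : 2 * (2 : R) ^- n.+1 = (2 : R) ^- n.
Proof. by rewrite exprS invfM mulrA mulfV ?mul1r // pnatr_eq0. Qed.

Lemma exp2N_lt_mul2 n m : (2 : R) ^- n < 2 * (2 : R) ^- m -> (m <= n)%N.
Proof.
rewrite leqNgt => lt_nm; apply/negP => /exp2N_le le_nm.
have := lt_le_trans lt_nm (ler_wpM2l (ler0n R 2) le_nm).
by rewrite mul2_exp2NS ltxx.
Qed.

End PowersOfHalf.

Section ResourceMetric.
Variable R : realType.
Local Notation r := (@rdist R).
Local Notation "t <=r u" := (pm_le r t u) (at level 70).

Lemma rdistE t u :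
  r t u = inf ([set (2 : R) ^- n | n in [set n | agree n t u]] `|` [set 1]).
Proof.
congr (inf (_ `|` _)); congr image; apply/seteqP; split=> n /=.
- by case=> n_gt0 [nt [nu tu]]; split=> //; rewrite -!truncE.
- by case=> n_gt0 nt nu tu; do ?split=> //; rewrite !truncE.
Qed.

Lemma rdist_ge c t u : c <= 1 -> (forall n, agree n t u -> c <= (2 : R) ^- n) ->
  c <= r t u.
Proof.
move=> c_le1 c_lb; rewrite rdistE.
by apply: lb_le_inf => [|_ [[n tu <-] | ->]] //; [exists 1; right | apply: c_lb].
Qed.

Lemma rdist_ge0 t u : 0 <= r t u.
Proof. by apply: rdist_ge => [|n _]; [apply: ler01 | apply/ltW/exp2N_gt0]. Qed.

Lemma has_lbound_rdist_set t u :
  has_lbound ([set (2 : R) ^- n | n in [set n | agree n t u]] `|` [set 1]).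
Proof. by exists 0 => _ [[m _ <-] | ->]; [apply/ltW/exp2N_gt0 | apply: ler01]. Qed.

Lemma rdist_le_agree n t u : agree n t u -> r t u <= (2 : R) ^- n.
Proof.
by move=> tu; rewrite rdistE; apply: ge_inf (has_lbound_rdist_set t u) _ _; left; exists n.
Qed.

Lemma rdist_le1 t u : r t u <= 1.
Proof. by rewrite rdistE; apply: ge_inf (has_lbound_rdist_set t u) _ _; right. Qed.

Lemma rdist_lt_agree m t u : (0 < m)%N -> r t u < 2 * (2 : R) ^- m ->
  exists2 n, (m <= n)%N & agree n t u.
Proof.
move=> m_gt0; rewrite rdistE => /inf_lt[|_ [[n tu <-] | ->] lt_m]; first by exists 1; right.
- by exists n => //; apply: exp2N_lt_mul2 lt_m.
- case: m m_gt0 lt_m => // m _; rewrite mul2_exp2NS => /lt_le_trans/(_ (exp2N_le1 R m)).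
  by rewrite ltxx.
Qed.

Lemma rdist_ge_height t u : (2 : R) ^- height t <= r t u.
Proof. by apply: rdist_ge => [|n [_ nt _ _]]; [apply: exp2N_le1 | apply: exp2N_le]. Qed.

Lemma rdist_self t : r t t <= (2 : R) ^- height t.
Proof. by apply/rdist_le_agree/agree_refl; rewrite height_gt0 leqnn. Qed.

Lemma pm_leP t u : t <=r u <-> agree (height t) t u.
Proof.
split=> [tu | /rdist_le_agree tu]; last exact: le_trans tu (rdist_ge_height t t).
have : r t u < 2 * (2 : R) ^- height t.
  by rewrite (le_lt_trans tu) // (le_lt_trans (rdist_self t)) // ltr_pMl ?exp2N_gt0 ?ltr1n.
case/rdist_lt_agree=> [|n tn tu']; first exact: height_gt0.
by have [_ nt _ _] := tu'; have -> : height t = n by apply/eqP; rewrite eqn_leq nt tn.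
Qed.

Lemma pm_le_refl t : t <=r t.
Proof. by apply/pm_leP/agree_refl; rewrite height_gt0 leqnn. Qed.

Lemma agree_pm_le m t u : (0 < m <= height t)%N -> t <=r u -> agree m t u.
Proof. by move=> mt /pm_leP; apply: agree_le. Qed.

Lemma pm_le_trans t u v : t <=r u -> u <=r v -> t <=r v.
Proof.
move=> /pm_leP tu uv; apply/pm_leP/(agree_trans tu).
by case: tu => _ _ tu _; apply: agree_pm_le uv; rewrite height_gt0.
Qed.

Lemma agree_pm_le_l n a a' b : agree n a b -> a <=r a' -> agree n a' b.
Proof.
move=> ab aa'; have [n_gt0 na _ _] := ab.
by apply: (agree_trans _ ab); apply/agree_sym/(agree_pm_le _ aa'); rewrite n_gt0 na.
Qed.

Lemma rdist_pm_le_l a a' b : a <=r a' -> r a' b <= r a b.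
Proof.
move=> aa'; apply: rdist_ge (rdist_le1 _ _) _ => n ab.
exact/rdist_le_agree/(agree_pm_le_l ab aa').
Qed.

Lemma rdist_pm_le_r a b b' : b <=r b' -> r a b' <= r a b.
Proof.
move=> bb'; apply: rdist_ge (rdist_le1 _ _) _ => n /agree_sym ab.
exact/rdist_le_agree/agree_sym/(agree_pm_le_l ab bb').
Qed.

Lemma pm_le_common_upper u w z : u <=r z -> w <=r z -> height u = height w -> u <=r w.
Proof.
move=> /pm_leP uz /pm_leP wz huw.
by apply/pm_leP/(agree_trans uz); rewrite huw; apply: agree_sym.
Qed.

End ResourceMetric.

Section IdealsOfNormalTerms.
Variable R : realType.
Local Notation r := (@rdist R).

Definition pideal (u : nterm) : Ide R :=
  principal_ideal (@pm_le_refl R) (@pm_le_trans R) u.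

Lemma Hstar_set_dist (A B : Ide R) :
  Hstar A B = set_dist r (proj1_sig A) (proj1_sig B).
Proof.
have [A0 B0] := (ideal_nonempty A, ideal_nonempty B).
set d := set_dist r _ _; rewrite /Hstar.
rewrite (eq_imagel (f' := fun=> d)) => [|a Aa]; last first.
  exact: (set_dist_abovel (@rdist_ge0 R) (@pm_le_refl R) (@rdist_pm_le_l R)
    (proj2_sig A) B0 Aa).
rewrite (eq_imagel (f' := fun=> d) (A := proj1_sig B)) => [|b Bb]; last first.
  exact: (set_dist_abover (@rdist_ge0 R) (@pm_le_refl R) (@rdist_pm_le_r R)
    A0 (proj2_sig B) Bb).
by rewrite !set_cst !ifN ?sup1 ?maxxx //; apply/set0P.
Qed.

Lemma set_dist_ideal_self (A : Ide R) u :
  proj1_sig A u -> set_dist r (proj1_sig A) (proj1_sig A) <= (2 : R) ^- height u.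
Proof. by move=> Au; apply: le_trans (set_dist_le (@rdist_ge0 R) Au Au) (rdist_self R u). Qed.

Lemma mem_of_set_dist_lt (A B : Ide R) u : proj1_sig A u ->
  set_dist r (proj1_sig B) (proj1_sig A) < 2 * (2 : R) ^- height u -> proj1_sig B u.
Proof.
have [_ [_ dirA]] := proj2_sig A; have [_ [lowB _]] := proj2_sig B.
move=> Au lt_u.
have [b [a [Bb Aa ba_lt]]] := set_dist_lt (ideal_nonempty B) (ideal_nonempty A) lt_u.
have [n un ba] := rdist_lt_agree (height_gt0 u) ba_lt.
have ba_u : agree (height u) b a by apply: agree_le ba; rewrite height_gt0.
have [hw wb wa] := agree_trunc_rec ba_u; set w := trunc_rec _ b in hw wb wa.
rewrite -hw in wb wa; move/(@pm_leP R) in wb; move/(@pm_leP R) in wa.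
have [z [_ [uz az]]] := dirA u a Au Aa.
have uw : pm_le r u w := pm_le_common_upper uz (pm_le_trans wa az) (esym hw).
exact: lowB Bb (pm_le_trans uw wb).
Qed.

Lemma Hstar_ball_upward (A X Y : Ide R) e :
  ide_le X Y -> pm_ball (@Hstar R) A e X -> pm_ball (@Hstar R) A e Y.
Proof.
rewrite /pm_ball /= !Hstar_set_dist => XY; apply: le_lt_trans.
exact: (set_dist_subl (@rdist_ge0 R) XY (ideal_nonempty X) (ideal_nonempty A)).
Qed.

Lemma Hstar_ball_principal (A X : Ide R) e : pm_ball (@Hstar R) A e X ->
  exists2 b, proj1_sig X b & pm_ball (@Hstar R) A e (pideal b).
Proof.
rewrite /pm_ball /= !Hstar_set_dist => XA.
have [b [a [Xb Aa ba]]] := set_dist_lt (ideal_nonempty X) (ideal_nonempty A) XA.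
exists b => //; rewrite Hstar_set_dist; apply: le_lt_trans ba.
by apply: (set_dist_le (@rdist_ge0 R) _ Aa); apply: pm_le_refl.
Qed.

Lemma pideal_sub_of_Hstar_ball (A B : Ide R) u : proj1_sig A u ->
  pm_ball (@Hstar R) A ((2 : R) ^- height u) B -> ide_le (pideal u) B.
Proof.
rewrite /pm_ball /= !Hstar_set_dist => Au BA; apply: principal_ideal_sub.
apply: (mem_of_set_dist_lt Au); apply: (lt_le_trans BA).
by rewrite mulr_natl mulr2n lerD2r (set_dist_ideal_self Au).
Qed.

End IdealsOfNormalTerms.

Theorem mainTheorem12 (R : realType) :
  [set U : set (Ide R) | scott_open (@ide_le R) U] =
  [set U : set (Ide R) | pm_open (@Hstar R) U].
Proof.
have scottP := scott_open_idealP (@pm_le_refl R) (@pm_le_trans R).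
rewrite predeqE => U; split=> [/scottP [Uup Ucompact] | [F [F_gt0 ->]]].
- exists [set Ae : Ide R * R |
    exists2 u, proj1_sig Ae.1 u & U (pideal R u) /\ Ae.2 = 2 ^- height u].
  split=> [[A e] [u _ [_ /= ->]] | ]; first exact: exp2N_gt0.
  rewrite predeqE => B; split=> [UB | [[A e] [u Au [Uu /= ->]] BA]].
  + have [b Bb Ub] := Ucompact B UB.
    exists (B, 2 ^- height b); first by exists b.
    by rewrite /pm_ball /= ltrDl exp2N_gt0.
  + exact: Uup (pideal_sub_of_Hstar_ball Au BA).
- apply/scottP; split=> [X Y [[A e] FAe XA] XY | X [[A e] FAe XA]].
  + by exists (A, e) => //; apply: Hstar_ball_upward XY XA.
  + have [b Xb bA] := Hstar_ball_principal XA.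
    by exists b => //; exists (A, e).
Qed.
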